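(* Let $n,m\ge1$, $r>0$, and let $\mathbf b_1,\dots,\mathbf b_m\in[0,\infty)^n$ be nonzero vectors. Put $D_{ij}=\frac{r}{m}(\mathbf b_i\cdot\mathbf b_j)$ and $\overline D=\max_{i,j}D_{ij}$. Define $\alpha^{(t)}\in\mathbb{R}^m$, $t\ge0$, by $\alpha^{(0)}_k=\sqrt{1/(\overline D m)}$ for all $k$, and, given $\alpha^{(t)}$: let $E_i^{(t)}=\sum_{j=1}^m D_{ij}\alpha^{(t)}_i\alpha^{(t)}_j-1$, choose $k=k_t$ with $|E^{(t)}_k|=\max_i|E^{(t)}_i|$, set $\alpha^{(t+1)}_i=\alpha^{(t)}_i$ for $i\neq k$ and $\alpha^{(t+1)}_k=\frac{-s+\sqrt{s^2+4D_{kk}}}{2D_{kk}}$ with $s=\sum_{i\ne k}D_{ik}\alpha^{(t)}_i$. Let $E^{(t)}=\sum_{i=1}^m|E^{(t)}_i|$. Then $\lim_{t\to\infty}E^{(t)}=0$. *)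

From mathcomp Require Import all_boot all_order all_algebra.
From mathcomp Require Import all_classical all_reals all_analysis.
Import Order.TTheory GRing.Theory Num.Theory.
Local Open Scope ring_scope.

Definition Dmat {R : realType} {n m : nat} (r : R) (b : 'I_m -> 'I_n -> R)
  (i j : 'I_m) : R :=
  r / m%:R * (\sum_(l < n) b i l * b j l).

(* Dbar = max_{i,j} D_{ij}; all D_{ij} >= 0 here, so 0 as neutral element is harmless *)
Definition Dbar {R : realType} {n m : nat} (r : R) (b : 'I_m -> 'I_n -> R) : R :=
  \big[Num.max/0]_(i < m) \big[Num.max/0]_(j < m) Dmat r b i j.

Definition Ecoord {R : realType} {n m : nat} (r : R) (b : 'I_m -> 'I_n -> R)
  (a : 'I_m -> R) (i : 'I_m) : R :=
  \sum_(j < m) Dmat r b i j * a i * a j - 1.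

Definition sval {R : realType} {n m : nat} (r : R) (b : 'I_m -> 'I_n -> R)
  (a : 'I_m -> R) (k : 'I_m) : R :=
  \sum_(i < m | i != k) Dmat r b i k * a i.

Definition newcoord {R : realType} {n m : nat} (r : R) (b : 'I_m -> 'I_n -> R)
  (a : 'I_m -> R) (k : 'I_m) : R :=
  let s := sval r b a k in
  (- s + Num.sqrt (s ^+ 2 + 4 * Dmat r b k k)) / (2 * Dmat r b k k).

(* The iteration is exact coordinate descent for the potential
   Phi(a) = a^T D a / 2 - sum_i ln a_i on the positive orthant: the new k-th
   coordinate is the positive root y of D_kk y^2 + s y = 1, the critical point
   of Phi along that coordinate.  Writing the old coordinate as v^2 y, one step
   lowers Phi by at least (v - 1)^2, and since E_k = (v^2 - 1)(D_kk y^2 v^2 + 1)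
   with D_kk y^2 <= 1, this is at least min(1, E_k^2 / 225).  As Phi is bounded
   below (each D_ii a_i^2 / 2 - ln a_i is), the decreases are summable, so the
   largest residual E_{k_t} tends to 0, and E^(t) <= m |E_{k_t}|. *)

From Pilot Require Import Defs.
From mathcomp Require Import all_boot all_order all_algebra.
From mathcomp Require Import all_classical all_reals all_analysis.
From mathcomp Require Import ring lra.
Import Order.TTheory GRing.Theory Num.Theory.
Import numFieldNormedType.Exports.
Local Open Scope classical_set_scope.
Local Open Scope ring_scope.

Section CoordinateMinimization.
Context {R : realType}.
Implicit Types d s c v x y : R.

Lemma ln_le_subr1 x : 0 < x -> ln x <= x - 1.
Proof.
move=> x0; have := @le_ln1Dx R (x - 1); rewrite (addrC 1) subrK; apply; lra.
Qed.

Definition coord_potential d s x := d * x ^+ 2 / 2 + s * x - ln x.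

Lemma min1_residual_le c v : 0 <= c <= 1 -> 0 < v ->
  Num.min 1 (((v ^+ 2 - 1) * (c * v ^+ 2 + 1)) ^+ 2 / 225) <= (v - 1) ^+ 2.
Proof.
move=> /andP[c0 c1] v0; have [v1|v1] := leP 1 ((v - 1) ^+ 2).
  by rewrite ge_min v1.
rewrite ge_min; apply/orP; right; rewrite ler_pdivrMr //.
have v2 : v < 2 by nra.
have h1 : (v + 1) ^+ 2 <= 9 by nra.
have h2 : (c * v ^+ 2 + 1) ^+ 2 <= 25.
  have : c * v ^+ 2 <= 4 by nra.
  have : 0 <= c * v ^+ 2 by rewrite mulr_ge0 ?sqr_ge0.
  nra.
have -> : (v ^+ 2 - 1) * (c * v ^+ 2 + 1) = (v - 1) * ((v + 1) * (c * v ^+ 2 + 1)).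
  by ring.
rewrite exprMn ler_wpM2l ?sqr_ge0 // exprMn.
have -> : (225 : R) = 9 * 25 by lra.
by rewrite ler_pM ?sqr_ge0.
Qed.

Section AtRoot.
Variables d s y : R.
Hypotheses (d0 : 0 < d) (y0 : 0 < y) (y_root : d * y ^+ 2 + s * y = 1).
Let c := d * y ^+ 2.

Let s_eq : s = (1 - c) / y.
Proof. by rewrite /c -y_root; field; rewrite gt_eqF. Qed.

Lemma coord_potential_sub_root v : 0 < v ->
  coord_potential d s (v ^+ 2 * y) - coord_potential d s y
  = c * (v ^+ 2 - 1) ^+ 2 / 2 + (v ^+ 2 - 1) - ln (v ^+ 2).
Proof.
move=> v0; rewrite /coord_potential lnM ?posrE ?exprn_gt0 // s_eq /c.
by field; rewrite gt_eqF.
Qed.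

Lemma residual_at_scaled_root v :
  v ^+ 2 * y * (d * (v ^+ 2 * y) + s) - 1 = (v ^+ 2 - 1) * (c * v ^+ 2 + 1).
Proof. by rewrite s_eq /c; field; rewrite gt_eqF. Qed.

End AtRoot.

Lemma coord_potential_decrease d s x y : 0 < d -> 0 <= s -> 0 < y ->
  d * y ^+ 2 + s * y = 1 -> 0 < x ->
  Num.min 1 ((x * (d * x + s) - 1) ^+ 2 / 225) <= coord_potential d s x - coord_potential d s y.
Proof.
move=> d0 s0 y0 y_root x0.
have xy0 : 0 < x / y by rewrite divr_gt0.
set v := Num.sqrt (x / y); have v0 : 0 < v by rewrite sqrtr_gt0.
have -> : x = v ^+ 2 * y by rewrite sqr_sqrtr ?divfK ?gt_eqF ?ltW.
rewrite residual_at_scaled_root // coord_potential_sub_root //.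
have c01 : 0 <= d * y ^+ 2 <= 1.
  by rewrite mulr_ge0 ?sqr_ge0 ?(ltW d0) //= -y_root lerDl mulr_ge0 // ltW.
apply: le_trans (min1_residual_le _ _ c01 v0) _.
have ln_v : ln (v ^+ 2) <= 2 * (v - 1).
  by rewrite lnXn // mulr2n; have := ln_le_subr1 _ v0; lra.
have : 0 <= d * y ^+ 2 * (v ^+ 2 - 1) ^+ 2 / 2.
  by case/andP: c01 => c0 _; rewrite divr_ge0 // mulr_ge0 ?sqr_ge0.
lra.
Qed.

End CoordinateMinimization.

Section Descent.
Context {R : realType}.

Lemma descent_cvg0 (u f : nat -> R) (B : R) :
  (forall t, 0 <= u t) -> (forall t, u t <= f t - f t.+1) ->
  (forall t, B <= f t) -> u @ \oo --> 0.
Proof.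
move=> u_ge0 u_le B_le; apply: cvg_series_cvg_0.
have partial_le T : \sum_(t < T) u t <= f 0%N - f T.
  elim: T => [|T IH]; first by rewrite big_ord0 subrr.
  by rewrite big_ord_recr /=; have := u_le T; lra.
apply: nondecreasing_is_cvgn.
  by apply/nondecreasing_seqP => t; rewrite seriesSr lerDl.
exists (f 0%N - B) => _ [T _ <-]; rewrite seriesEord /=.
by have := partial_le T; have := B_le T; lra.
Qed.

Lemma min1_sqr_cvg0 (x : nat -> R) (c : R) : 0 < c ->
  (fun t => Num.min 1 (x t ^+ 2 / c)) @ \oo --> 0 -> x @ \oo --> 0.
Proof.
move=> c_gt0 /cvgr0Pnorm_lt g_cvg; apply/cvgr0Pnorm_lt => e e_gt0.
have min_gt0 : 0 < Num.min 1 (e ^+ 2 / c) by rewrite lt_min ltr01 divr_gt0 ?exprn_gt0.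
apply: filterS (g_cvg _ min_gt0) => t.
rewrite ger0_norm ?le_min ?ler01 ?divr_ge0 ?sqr_ge0 ?ltW //.
apply: contraTT; rewrite -!leNgt => e_le.
apply: le_min2 => //; rewrite ler_pM2r ?invr_gt0 //.
by rewrite -[x t ^+ 2]real_normK ?num_real // lerXn2r ?nnegrE ?normr_ge0 ?(ltW e_gt0).
Qed.

End Descent.

Section Potential.
Variables (R : realType) (n m : nat) (r : R) (b : 'I_m -> 'I_n -> R).
Local Notation D := (Dmat r b).
Local Notation sval := (Defs.sval r b).
Implicit Types (a : 'I_m -> R) (i j k : 'I_m).

Definition quadform a := \sum_i \sum_j D i j * a i * a j.

Definition potential a := quadform a / 2 - \sum_i ln (a i).

Lemma Dmat_sym i j : D i j = D j i.
Proof. by rewrite /Dmat; congr (_ * _); apply: eq_bigr => l _; rewrite mulrC. Qed.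

Lemma sum_row_offdiag a k :
  \sum_(j | j != k) D k j * a k * a j = a k * sval a k.
Proof.
by rewrite /sval mulr_sumr; apply: eq_bigr => j _; rewrite Dmat_sym mulrCA mulrA.
Qed.

Lemma Ecoord_split a k : Ecoord r b a k = a k * (D k k * a k + sval a k) - 1.
Proof.
by rewrite /Ecoord (bigD1 k) //= sum_row_offdiag mulrDr; congr (_ + _ - _); ring.
Qed.

Lemma potential_split a k : potential a = coord_potential (D k k) (sval a k) (a k) +
  ((\sum_(i | i != k) \sum_(j | j != k) D i j * a i * a j) / 2
   - \sum_(i | i != k) ln (a i)).
Proof.
have row_i i : i != k -> \sum_j D i j * a i * a j
    = a k * (D i k * a i) + \sum_(j | j != k) D i j * a i * a j.
  by move=> _; rewrite (bigD1 k) //= [D i k * _ * _]mulrC.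
rewrite /potential /quadform /coord_potential (bigD1 k) //= (bigD1 k) //= sum_row_offdiag.
rewrite (eq_bigr _ row_i) big_split /= -mulr_sumr -/(sval a k).
by rewrite [\sum_i ln _](bigD1 k) //=; field.
Qed.

Lemma potential_update a a' k : (forall i, i != k -> a' i = a i) ->
  potential a - potential a' =
  coord_potential (D k k) (sval a k) (a k) - coord_potential (D k k) (sval a k) (a' k).
Proof.
move=> a'E; rewrite !(potential_split _ k).
have -> : sval a' k = sval a k by apply: eq_bigr => i ik; rewrite a'E.
have -> : \sum_(i | i != k) ln (a' i) = \sum_(i | i != k) ln (a i).
  by apply: eq_bigr => i ik; rewrite a'E.
have -> : \sum_(i | i != k) \sum_(j | j != k) D i j * a' i * a' j
        = \sum_(i | i != k) \sum_(j | j != k) D i j * a i * a j.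
  by apply: eq_bigr => i ik; apply: eq_bigr => j jk; rewrite !a'E.
ring.
Qed.

Hypotheses (r_gt0 : 0 < r) (b_ge0 : forall i l, 0 <= b i l).

Lemma Dmat_ge0 i j : 0 <= D i j.
Proof.
rewrite mulr_ge0 ?divr_ge0 ?ler0n ?(ltW r_gt0) //.
by rewrite sumr_ge0 // => l _; rewrite mulr_ge0.
Qed.

Lemma Dmat_diag_gt0 k : (exists l, b k l != 0) -> 0 < D k k.
Proof.
case=> l bkl; have m_gt0 : (0 < m)%N := leq_ltn_trans (leq0n k) (ltn_ord k).
rewrite /Dmat mulr_gt0 ?divr_gt0 ?ltr0n // (bigD1 l) //= ltr_pwDl //.
  by rewrite mulr_gt0 // lt_def bkl b_ge0.
by rewrite sumr_ge0 // => j _; rewrite mulr_ge0.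
Qed.

Lemma Dmat_le_Dbar i j : D i j <= Dbar r b.
Proof.
apply: le_trans (le_bigmax _ _ i).
exact: (le_bigmax _ (fun j => D i j) j).
Qed.

Lemma Dbar_gt0 i : (exists l, b i l != 0) -> 0 < Dbar r b.
Proof. by move/Dmat_diag_gt0/lt_le_trans; apply; exact: Dmat_le_Dbar. Qed.

Lemma sval_ge0 a k : (forall i, 0 <= a i) -> 0 <= sval a k.
Proof. by move=> a_ge0; rewrite sumr_ge0 // => i _; rewrite mulr_ge0 ?Dmat_ge0. Qed.

Section NewCoord.
Variables (a : 'I_m -> R) (k : 'I_m).
Hypotheses (Dkk_gt0 : 0 < D k k) (s_ge0 : 0 <= sval a k).

Let disc_gt_s :
  sval a k < Num.sqrt (sval a k ^+ 2 + 4 * D k k).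
Proof.
rewrite -ltr_sqr ?nnegrE ?sqrtr_ge0 // sqr_sqrtr ?ltrDl ?(mulr_gt0 _ Dkk_gt0) //.
by rewrite addr_ge0 ?sqr_ge0 // mulr_ge0 // ltW.
Qed.

Lemma newcoord_gt0 : 0 < newcoord r b a k.
Proof. by rewrite /newcoord /= divr_gt0 ?(mulr_gt0 _ Dkk_gt0) // addrC subr_gt0. Qed.

Lemma newcoord_root :
  D k k * newcoord r b a k ^+ 2 + sval a k * newcoord r b a k = 1.
Proof.
rewrite /newcoord; set s := sval a k; set w := Num.sqrt _.
have w2 : w ^+ 2 = s ^+ 2 + 4 * D k k.
  by rewrite sqr_sqrtr // addr_ge0 ?sqr_ge0 // mulr_ge0 ?ltW.
apply/eqP; rewrite -subr_eq0; apply/eqP.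
have -> : D k k * ((- s + w) / (2 * D k k)) ^+ 2 + s * ((- s + w) / (2 * D k k)) - 1
    = (w ^+ 2 - s ^+ 2 - 4 * D k k) / (4 * D k k).
  by field; rewrite gt_eqF.
by rewrite w2 [s ^+ 2 + _]addrC addrK subrr mul0r.
Qed.

End NewCoord.

Lemma potential_ge a : (forall i, 0 < D i i) -> (forall i, 0 < a i) ->
  \sum_i (1 - 1 / (2 * D i i)) <= potential a.
Proof.
move=> D_gt0 a_gt0.
have quad_ge : \sum_i D i i * a i ^+ 2 <= quadform a.
  apply: ler_sum => i _; rewrite (bigD1 i) //= -mulrA -expr2 lerDl.
  by rewrite sumr_ge0 // => j _; rewrite mulr_ge0 1?mulr_ge0 ?Dmat_ge0 // ltW.
apply: (@le_trans _ _ (\sum_i (D i i * a i ^+ 2 / 2 - (a i - 1)))).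
  apply: ler_sum => i _; rewrite -subr_ge0.
  have -> : D i i * a i ^+ 2 / 2 - (a i - 1) - (1 - 1 / (2 * D i i))
      = (D i i * a i - 1) ^+ 2 / (2 * D i i) by field; rewrite gt_eqF.
  by rewrite divr_ge0 ?sqr_ge0 // mulr_ge0 ?ltW.
rewrite /potential big_split /= -sumrN -mulr_suml lerD ?ler_pM2r //.
by apply: ler_sum => i _; rewrite lerN2 ln_le_subr1.
Qed.

Section Iterates.
Variables (alpha : nat -> 'I_m -> R) (kk : nat -> 'I_m).
Hypotheses (b_neq0 : forall i, exists l, b i l != 0)
  (alpha0 : forall i, alpha 0%N i = Num.sqrt (1 / (Dbar r b * m%:R)))
  (alpha_off : forall t i, i != kk t -> alpha t.+1 i = alpha t i)
  (alpha_new : forall t, alpha t.+1 (kk t) = newcoord r b (alpha t) (kk t)).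

Let Ddiag_gt0 i : 0 < D i i := Dmat_diag_gt0 _ (b_neq0 i).

Lemma iterate_gt0 t i : 0 < alpha t i.
Proof.
elim: t i => [|t IH] i.
  have m_gt0 : (0 < m)%N := leq_ltn_trans (leq0n i) (ltn_ord i).
  by rewrite alpha0 sqrtr_gt0 divr_gt0 ?mulr_gt0 ?ltr0n ?(Dbar_gt0 _ (b_neq0 i)).
have [->|/alpha_off->//] := eqVneq i (kk t).
by rewrite alpha_new newcoord_gt0 ?sval_ge0 // => j; exact/ltW.
Qed.

Lemma potential_descent t :
  Num.min 1 (Ecoord r b (alpha t) (kk t) ^+ 2 / 225)
  <= potential (alpha t) - potential (alpha t.+1).
Proof.
have s_ge0 : 0 <= sval (alpha t) (kk t) by rewrite sval_ge0 // => j; exact/ltW/iterate_gt0.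
rewrite (potential_update _ _ _ (alpha_off t)) Ecoord_split alpha_new.
by rewrite coord_potential_decrease ?newcoord_gt0 ?newcoord_root ?iterate_gt0.
Qed.

Lemma max_residual_cvg0 : (fun t => Ecoord r b (alpha t) (kk t)) @ \oo --> 0.
Proof.
apply: (@min1_sqr_cvg0 _ _ 225) => //.
apply: (@descent_cvg0 _ _ _ _ _ potential_descent
  (fun t => potential_ge _ Ddiag_gt0 (iterate_gt0 t))).
by move=> t; rewrite le_min ler01 divr_ge0 ?sqr_ge0.
Qed.

End Iterates.

End Potential.

Arguments max_residual_cvg0 {R n m r b} r_gt0 b_ge0 {alpha kk}.

Theorem lemma5 (R : realType) (n m : nat) (r : R)
  (b : 'I_m -> 'I_n -> R)
  (alpha : nat -> 'I_m -> R) (kk : nat -> 'I_m) :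
  (0 < n)%N -> (0 < m)%N -> 0 < r ->
  (forall i l, 0 <= b i l) ->
  (forall i, exists l, b i l != 0) ->
  (forall k, alpha 0%N k = Num.sqrt (1 / (Dbar r b * m%:R))) ->
  (forall t i, `|Ecoord r b (alpha t) i| <= `|Ecoord r b (alpha t) (kk t)|) ->
  (forall t i, i != kk t -> alpha t.+1 i = alpha t i) ->
  (forall t, alpha t.+1 (kk t) = newcoord r b (alpha t) (kk t)) ->
  (fun t => \sum_(i < m) `|Ecoord r b (alpha t) i|) @ \oo --> (0 : R).
Proof.
move=> _ _ r_gt0 b_ge0 b_neq0 alpha0 kk_max alpha_off alpha_new.
have Ekk_cvg0 :=
  max_residual_cvg0 r_gt0 b_ge0 b_neq0 alpha0 alpha_off alpha_new.
apply: (@squeeze_cvgr _ _ _ _ (fun=> 0) (fun t => m%:R * `|Ecoord r b (alpha t) (kk t)|)).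
- near=> t; rewrite sumr_ge0 //=.
  apply: le_trans (ler_sum _ (fun i _ => kk_max t i)) _.
  by rewrite sumr_const card_ord mulr_natl.
- exact: cvg_cst.
- by rewrite -(mulr0 m%:R) -(normr0 R); apply: cvgMl_tmp; apply: cvg_norm.
Unshelve. all: by end_near.
Qed.
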